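(* Let $f,g:(0,\infty)\to\mathbb{R}$ be strictly increasing and differentiable with $f'>0$ and $g'>0$ on $(0,\infty)$, and suppose that $f\circ g^{-1}$ is strictly convex on $g((0,\infty))$. Let $p,q$ be positive densities with respect to a positive measure $\mu$ on a measurable space $\mathcal{X}$. Then the quasi-arithmetic $1$-divergence satisfies $$I_1^{f,g}[p:q]=\lim_{\alpha\to 1} I_\alpha^{f,g}[p:q]=\int\left(\frac{f(q)-f(p)}{f'(p)}-\frac{g(q)-g(p)}{g'(p)}\right)\mathrm{d}\mu\;\geq\;0,$$ and $I_0^{f,g}[p:q]:=\lim_{\alpha\to0}I_\alpha^{f,g}[p:q]=I_1^{f,g}[q:p]$.
   Context: For a strictly increasing continuous generator $h$ on $(0,\infty)$, the weighted quasi-arithmetic mean is $M^h_\lambda(x,y)=h^{-1}\big((1-\lambda)h(x)+\lambda h(y)\big)$. For $\alpha\in(0,1)$ the quasi-arithmetic $\alpha$-divergence between positive densities $p,q$ is $$I_\alpha^{f,g}[p:q]=\frac{1}{\alpha(1-\alpha)}\int\big(M^f_{1-\alpha}(p(x),q(x))-M^g_{1-\alpha}(p(x),q(x))\big)\,\mathrm{d}\mu(x),$$ and $I_1^{f,g}$, $I_0^{f,g}$ denote its limits as $\alpha\to1$ and $\alpha\to0$ respectively (the limit being taken under the integral sign). *)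

From HB Require Import structures.
From mathcomp Require Import all_boot all_order all_algebra.
From mathcomp Require Import all_classical all_reals all_analysis.
Set Implicit Arguments. Unset Strict Implicit. Unset Printing Implicit Defensive.
Import Order.TTheory GRing.Theory Num.Theory.
Import numFieldNormedType.Exports.
Local Open Scope classical_set_scope.
Local Open Scope ring_scope.

(* Inverse of a generator h restricted to (0,+oo): h^{-1}(y) is the (unique,
   for strictly increasing h) x > 0 with h x = y (default 0 if none). *)
Definition inv_pos {R : realType} (h : R -> R) (y : R) : R :=
  xget 0 [set x | 0 < x /\ h x = y].

Definition qa_mean {R : realType} (h : R -> R) (lam x y : R) : R :=
  inv_pos h ((1 - lam) * h x + lam * h y).

Definition qa_integrand {R : realType} (f g : R -> R) (a x y : R) : R :=
  (qa_mean f (1 - a) x y - qa_mean g (1 - a) x y) / (a * (1 - a)).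

Definition qa_div {R : realType} (f g : R -> R) (d : measure_display)
  (T : measurableType d) (mu : {measure set T -> \bar R}) (a : R)
  (p q : T -> R) : \bar R :=
  (\int[mu]_x (qa_integrand f g a (p x) (q x))%:E)%E.

Definition qa_div1 {R : realType} (f g : R -> R) (d : measure_display)
  (T : measurableType d) (mu : {measure set T -> \bar R})
  (p q : T -> R) : \bar R :=
  (\int[mu]_x (lim (qa_integrand f g a (p x) (q x) @[a --> 1^'-]))%:E)%E.

Definition qa_div0 {R : realType} (f g : R -> R) (d : measure_display)
  (T : measurableType d) (mu : {measure set T -> \bar R})
  (p q : T -> R) : \bar R :=
  (\int[mu]_x (lim (qa_integrand f g a (p x) (q x) @[a --> 0^'+]))%:E)%E.

(* h strictly convex on the set D (D assumed an interval here). *)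
Definition strictly_convex_on {R : realType} (D : set R) (h : R -> R) : Prop :=
  forall u v t, D u -> D v -> u != v -> 0 < t < 1 ->
    h ((1 - t) * u + t * v) < (1 - t) * h u + t * h v.

Definition qa_limit_integrand {R : realType} (f g : R -> R) (x y : R) : R :=
  (f y - f x) / derive1 f x - (g y - g x) / derive1 g x.

From HB Require Import structures.
From mathcomp Require Import all_boot all_order all_algebra.
From mathcomp Require Import all_classical all_reals all_analysis.
From mathcomp Require Import ring lra.
Set Implicit Arguments. Unset Strict Implicit. Unset Printing Implicit Defensive.
Import Order.TTheory GRing.Theory Num.Theory.
Import numFieldNormedType.Exports.
Local Open Scope classical_set_scope.
Local Open Scope ring_scope.

(* Put lam = 1 - alpha.  Since M^h_lam(x, y) = h^-1 (h x + lam (h y - h x)), the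
   inverse function rule gives (M^h_lam(x, y) - x) / lam --> (h y - h x) / h'(x)
   as lam --> 0+, and the alpha-integrand (M^f_lam - M^g_lam) / (lam (1 - lam))
   is the difference of two such quotients divided by 1 - lam.  Strict convexity
   of f o g^-1 is Jensen's inequality M^g_lam <= M^f_lam, so every integrand is
   nonnegative, hence so is the limit.  The case alpha --> 0 reduces to
   alpha --> 1 through M_lam(x, y) = M_(1 - lam)(y, x). *)

Lemma cvg_within_near {T} {U : topologicalType} (F : set_system T)
    {FF : Filter F} (f : T -> U) (a : U) (D : set U) :
  f @ F --> a -> (\forall t \near F, D (f t)) -> f @ F --> within D (nbhs a).
Proof.
move=> fa fD A /fa; apply: filterS2 fD => t Dft Aft; exact: Aft.
Qed.

Section Reflection.
Variable R : realFieldType.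

Lemma subr_at_left (b x : R) : (b - t) @[t --> x^'-] --> (b - x)^'+.
Proof.
apply: cvg_within_near.
  by apply: cvg_at_left_filter; apply: cvgB; [exact: cvg_cst | exact: cvg_id].
by near=> t; rewrite /= ltrD2l ltrN2; near: t; exact: nbhs_left_lt.
Unshelve. all: by end_near. Qed.

Lemma subr_at_right (b x : R) : (b - t) @[t --> x^'+] --> (b - x)^'-.
Proof.
apply: cvg_within_near.
  by apply: cvg_at_right_filter; apply: cvgB; [exact: cvg_cst | exact: cvg_id].
by near=> t; rewrite /= ltrD2l ltrN2; near: t; exact: nbhs_right_gt.
Unshelve. all: by end_near. Qed.

End Reflection.

Lemma derive_dirE (R : realFieldType) (F : R -> R) a c :
  derivable F a 1 -> 'D_c F a = c * derive1 F a.
Proof.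
move=> dF; rewrite deriveE; last exact/derivable1_diffP.
by rewrite deriv1E.
Qed.

Lemma diff_quotient_cvg_right (R : realFieldType) (F : R -> R) a c :
  derivable F a 1 ->
  (F (a + t * c) - F a) / t @[t --> 0^'+] --> c * derive1 F a.
Proof.
move=> dF; rewrite -derive_dirE //; apply: cvg_dnbhs_at_right.
have dFc : derivable F a c by apply: diff_derivable; exact/derivable1_diffP.
apply: cvg_trans dFc; apply: near_eq_cvg; apply: nearW => t.
by rewrite /= [a + _]addrC [RHS]mulrC.
Qed.

Lemma near_gt0 (R : realFieldType) (x : R) : 0 < x -> \forall z \near x, 0 < z.
Proof. exact: (@cvgr_gt R R (nbhs x) _ id x cvg_id). Qed.

Section Generator.
Variables (R : realType) (h : R -> R).
Hypothesis h_incr : forall x y, 0 < x -> x < y -> h x < h y.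
Hypothesis h_der : forall x, 0 < x -> derivable h x 1.

Lemma gen_le x y : 0 < x -> x <= y -> h x <= h y.
Proof. by move=> x0; rewrite le_eqVlt => /predU1P[->|/(h_incr x0)/ltW]. Qed.

Lemma gen_inj x y : 0 < x -> 0 < y -> h x = h y -> x = y.
Proof.
move=> x0 y0 hxy; case: (ltgtP x y) => // [/(h_incr x0)|/(h_incr y0)];
  by rewrite hxy ltxx.
Qed.

Lemma inv_posK x : 0 < x -> inv_pos h (h x) = x.
Proof.
move=> x0; suff /(xgetPex 0)[z0 hz] : exists z, 0 < z /\ h z = h x.
  exact: gen_inj.
by exists x.
Qed.

Lemma gen_convex_image x y l : 0 < x -> 0 < y -> 0 <= l <= 1 ->
  exists2 z, 0 < z & h z = (1 - l) * h x + l * h y.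
Proof.
wlog xy : x y l / x <= y => [wlog_xy x0 y0 l01|x0 y0 /andP[l0 l1]].
  have [xy|/ltW yx] := leP x y; first exact: wlog_xy.
  have -> : (1 - l) * h x + l * h y = (1 - (1 - l)) * h y + (1 - l) * h x.
    by ring.
  by apply: wlog_xy => //; lra.
have hxy := gen_le x0 xy.
have h_cont : {within `[x, y], continuous h}.
  apply: derivable_within_continuous => z; rewrite in_itv /= => /andP[xz _].
  exact/h_der/(lt_le_trans x0 xz).
have [|z] := IVT (v := (1 - l) * h x + l * h y) xy h_cont.
  rewrite ge_min le_max; apply/andP.
  by split; [apply/orP; left | apply/orP; right]; nra.
rewrite in_itv /= => /andP[xz _] <-; exists z => //; exact: lt_le_trans xz.
Qed.

Lemma qa_mean_spec l x y : 0 < x -> 0 < y -> 0 <= l <= 1 ->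
  0 < qa_mean h l x y /\ h (qa_mean h l x y) = (1 - l) * h x + l * h y.
Proof.
move=> x0 y0 /(gen_convex_image x0 y0)[z z0 hz].
suff : exists z, 0 < z /\ h z = (1 - l) * h x + l * h y by move/(xgetPex 0).
by exists z.
Qed.

Lemma qa_meanxx l x : 0 < x -> qa_mean h l x x = x.
Proof. by move=> x0; rewrite /qa_mean -mulrDl subrK mul1r inv_posK. Qed.

Lemma is_derive_inv_pos x : 0 < x -> derive1 h x != 0 ->
  is_derive (h x) 1 (inv_pos h) (derive1 h x)^-1.
Proof.
move=> x0 h'x; apply: is_derive_inverse => //.
- by near=> z; apply: inv_posK; near: z; exact: near_gt0.
- near=> z; apply/differentiable_continuous/derivable1_diffP/h_der.
  by near: z; exact: near_gt0.
- by rewrite derive1E; apply: derivableP; exact: h_der.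
Unshelve. all: by end_near. Qed.

Lemma qa_mean_quotient_cvg x y : 0 < x -> derive1 h x != 0 ->
  (qa_mean h l x y - x) / l @[l --> 0^'+] --> (h y - h x) / derive1 h x.
Proof.
move=> x0 h'x; have [inv_der inv_derE] := is_derive_inv_pos x0 h'x.
have -> : (fun l => (qa_mean h l x y - x) / l) =
    (fun l => (inv_pos h (h x + l * (h y - h x)) - inv_pos h (h x)) / l).
  apply/funext => l; rewrite inv_posK // /qa_mean.
  by congr ((inv_pos h _ - x) / l); ring.
rewrite -inv_derE -derive1E; exact: diff_quotient_cvg_right.
Qed.

End Generator.

Lemma qa_integrand_swap (R : realType) (f g : R -> R) a x y :
  qa_integrand f g a x y = qa_integrand f g (1 - a) y x.
Proof.
rewrite /qa_integrand /qa_mean.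
by congr ((inv_pos f _ - inv_pos g _) / _); ring.
Qed.

Section QuasiArithmeticIntegrand.
Variables (R : realType) (f g : R -> R).
Hypothesis f_incr : forall x y, 0 < x -> x < y -> f x < f y.
Hypothesis g_incr : forall x y, 0 < x -> x < y -> g x < g y.
Hypothesis f_der : forall x, 0 < x -> derivable f x 1 /\ 0 < derive1 f x.
Hypothesis g_der : forall x, 0 < x -> derivable g x 1 /\ 0 < derive1 g x.

Let f_derivable x (x0 : 0 < x) := (f_der x0).1.
Let g_derivable x (x0 : 0 < x) := (g_der x0).1.

Lemma qa_integrand_cvg1 x y : 0 < x ->
  qa_integrand f g a x y @[a --> 1^'-] --> qa_limit_integrand f g x y.
Proof.
move=> x0; have one_minus := @subr_at_left R 1 1; rewrite subrr in one_minus.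
have Qf := cvg_comp _ _ one_minus (qa_mean_quotient_cvg f_incr f_derivable
  (y := y) x0 (lt0r_neq0 (f_der x0).2)).
have Qg := cvg_comp _ _ one_minus (qa_mean_quotient_cvg g_incr g_derivable
  (y := y) x0 (lt0r_neq0 (g_der x0).2)).
have inv1 : a^-1 @[a --> (1 : R)^'-] --> (1 : R)^-1.
  exact/cvg_at_left_filter/(cvgV (oner_neq0 _))/cvg_id.
rewrite -[qa_limit_integrand f g x y]mulr1 -[X in _ * X]invr1.
apply: cvg_trans _ (cvgM (cvgB Qf Qg) inv1).
apply: near_eq_cvg; apply: nearW => a /=.
by rewrite /qa_integrand invfM !fctE /=; ring.
Qed.

Lemma qa_integrand_cvg0 x y : 0 < y ->
  qa_integrand f g a x y @[a --> 0^'+] --> qa_limit_integrand f g y x.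
Proof.
move=> y0; have one_minus := @subr_at_right R 1 0; rewrite subr0 in one_minus.
have := cvg_comp _ _ one_minus (qa_integrand_cvg1 (y := x) y0).
apply: cvg_trans; apply: near_eq_cvg; apply: nearW => a.
by rewrite /= [RHS]qa_integrand_swap.
Qed.

Hypothesis fg_convex : strictly_convex_on (g @` `]0, +oo[) (f \o inv_pos g).

Lemma qa_mean_le l x y : 0 < x -> 0 < y -> 0 < l < 1 ->
  qa_mean g l x y <= qa_mean f l x y.
Proof.
move=> x0 y0 l_in.
have [<-|xy] := eqVneq x y; first by rewrite !qa_meanxx.
have l01 : 0 <= l <= 1 by case/andP: l_in => l0 l1; rewrite !ltW.
have [Mg0 gMg] := qa_mean_spec g_incr g_derivable x0 y0 l01.
have [Mf0 fMf] := qa_mean_spec f_incr f_derivable x0 y0 l01.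
have gxy : g x != g y by apply: contra_neq xy; exact: gen_inj.
have g_img z : 0 < z -> (g @` `]0, +oo[) (g z).
  by move=> z0; exists z => //=; rewrite in_itv /= andbT.
have := fg_convex (g_img _ x0) (g_img _ y0) gxy l_in.
rewrite /= !inv_posK // -fMf -gMg inv_posK // => fMg_lt.
rewrite leNgt; apply: contraTN fMg_lt => /ltW /(gen_le f_incr Mf0).
by rewrite -leNgt.
Qed.

Lemma qa_integrand_ge0 a x y : 0 < x -> 0 < y -> 0 < a < 1 ->
  0 <= qa_integrand f g a x y.
Proof.
move=> x0 y0 /andP[a0 a1]; apply: divr_ge0.
  by rewrite subr_ge0; apply: qa_mean_le => //; apply/andP; split; lra.
by apply: mulr_ge0; lra.
Qed.

Lemma qa_limit_integrand_ge0 x y : 0 < x -> 0 < y ->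
  0 <= qa_limit_integrand f g x y.
Proof.
move=> x0 y0.
apply: (closed_cvg _ (@closed_ge R 0) _ _ (qa_integrand_cvg1 (y := y) x0)).
near=> a; apply: qa_integrand_ge0 => //; apply/andP; split; near: a.
  exact: nbhs_left_gt.
exact: nbhs_left_lt.
Unshelve. all: by end_near. Qed.

Lemma qa_div1E d (T : measurableType d) (mu : {measure set T -> \bar R})
    (p q : T -> R) : (forall t, 0 < p t) ->
  qa_div1 f g mu p q = (\int[mu]_t (qa_limit_integrand f g (p t) (q t))%:E)%E.
Proof.
move=> pp; apply: eq_integral => t _.
by rewrite (cvg_lim _ (qa_integrand_cvg1 (y := q t) (pp t))).
Qed.

Lemma qa_div0E d (T : measurableType d) (mu : {measure set T -> \bar R})
    (p q : T -> R) : (forall t, 0 < q t) ->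
  qa_div0 f g mu p q = (\int[mu]_t (qa_limit_integrand f g (q t) (p t))%:E)%E.
Proof.
move=> qp; apply: eq_integral => t _.
by rewrite (cvg_lim _ (qa_integrand_cvg0 (x := p t) (qp t))).
Qed.

End QuasiArithmeticIntegrand.

Theorem theorem2 (R : realType) (f g : R -> R)
  (hf_incr : forall x y, 0 < x -> x < y -> f x < f y)
  (hg_incr : forall x y, 0 < x -> x < y -> g x < g y)
  (hf_der : forall x, 0 < x -> derivable f x 1 /\ 0 < derive1 f x)
  (hg_der : forall x, 0 < x -> derivable g x 1 /\ 0 < derive1 g x)
  (hconv : strictly_convex_on (g @` `]0, +oo[) (f \o inv_pos g))
  (d : measure_display) (T : measurableType d) (mu : {measure set T -> \bar R})
  (p q : T -> R)
  (mp : measurable_fun setT p) (mq : measurable_fun setT q)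
  (pp : forall x, 0 < p x) (qp : forall x, 0 < q x) :
  (forall x, qa_integrand f g a (p x) (q x) @[a --> 1^'-]
               --> qa_limit_integrand f g (p x) (q x)) /\
  qa_div1 f g mu p q = (\int[mu]_x (qa_limit_integrand f g (p x) (q x))%:E)%E /\
  (0 <= \int[mu]_x (qa_limit_integrand f g (p x) (q x))%:E)%E /\
  (forall x, qa_integrand f g a (p x) (q x) @[a --> 0^'+]
               --> qa_limit_integrand f g (q x) (p x)) /\
  qa_div0 f g mu p q = qa_div1 f g mu q p.
Proof.
split; first by move=> x; exact: qa_integrand_cvg1.
split; first exact: qa_div1E.
split.
  apply: integral_ge0 => x _; rewrite lee_fin.
  exact: qa_limit_integrand_ge0.
split; first by move=> x; exact: qa_integrand_cvg0.
by rewrite qa_div0E // qa_div1E.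
Qed.
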